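(* Let $A$ be a ribbon Littlewood–Richardson tableau of shape $\alpha=(\alpha_1,\dots,\alpha_m)$, and let $i\in\{1,\dots,m-1\}$ with $\alpha_i>\alpha_{i+1}$. Let $A_{(i\ i+1)}$ be the ribbon tableau of shape $\alpha_{(i\ i+1)}$ obtained from $A$ by applying the $R$-matrix algorithm to rows $i$ and $i+1$ (all other rows unchanged). Then $A_{(i\ i+1)}$ is a Yamanouchi tableau.
   Context: Ribbons: a composition $\alpha=(\alpha_1,\dots,\alpha_m)$ (each $\alpha_i\ge 2$) determines the ribbon skew shape with $m$ rows whose $i$-th row from the top has $\alpha_i$ boxes, where the leftmost box of row $i$ lies directly above the rightmost box of row $i+1$ and no other columns are shared. For $\pi\in S_m$, $\alpha_\pi=(\alpha_{\pi^{-1}(1)},\dots,\alpha_{\pi^{-1}(m)})$; so $\alpha_{(i\ i+1)}$ is $\alpha$ with the $i$-th and $(i+1)$-st entries swapped. A ribbon tableau is a filling of the boxes with positive integers. It is semistandard if entries weakly increase left to right along rows and strictly increase down columns (for a ribbon: each row is weakly increasing, and the rightmost entry of row $i+1$ is strictly greater than the leftmost entry of row $i$). The reverse reading word (RRW) reads each row right to left, rows taken top to bottom. A word is Yamanouchi if every prefix contains at least as many $k$'s as $(k+1)$'s for every $k\ge1$; a tableau is Yamanouchi if its RRW is. A Littlewood–Richardson (LR) tableau is one that is both semistandard and Yamanouchi; its content is $\mu=(\mu_1,\mu_2,\dots)$ with $\mu_k$ the number of entries equal to $k$. $R$-matrix algorithm on rows $i,i+1$ with $\alpha_i>\alpha_{i+1}$: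 form a left multiset $L$ = entries of row $i$ and a right multiset $R$ = entries of row $i+1$. Process each element $b$ of $R$ (in any order; the result is independent of the order): match $b$ to a not-yet-matched element of $L$ that is strictly less than $b$ and as large as possible among such; if no unmatched element of $L$ is less than $b$, match $b$ to a largest unmatched element of $L$. After all of $R$ is processed, exactly $\alpha_{i+1}$ elements of $L$ are matched and $\alpha_i-\alpha_{i+1}$ are unmatched. The new row $i$ consists of the matched elements of $L$ in weakly increasing order (length $\alpha_{i+1}$), and the new row $i+1$ consists of all elements of $R$ together with the unmatched elements of $L$ in weakly increasing order (length $\alpha_i$). Example: rows $1,3,3,4,7$ over $1,3,5$ become $1,4,7$ over $1,3,3,3,5$. This preserves the total content of the two rows and weak increase within each row. *)

From mathcomp Require Import all_boot.
Set Implicit Arguments. Unset Strict Implicit. Unset Printing Implicit Defensive.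

(* A ribbon tableau is a list of rows, top row first; row i (0-indexed)
   is the list of its entries read left to right.  Its shape (composition)
   is [seq size r | r <- T]. *)
Definition tableau := seq (seq nat).

Definition shape (T : tableau) : seq nat := [seq size r | r <- T].

Definition ribbon_shape (T : tableau) : bool := all (fun r => 2 <= size r) T.

Definition positive_entries (T : tableau) : bool := all (all (fun x => 0 < x)) T.

Definition ribbon_semistandard (T : tableau) : Prop :=
  (forall r, r \in T -> sorted leq r) /\
  (forall i, i.+1 < size T ->
     head 0 (nth [::] T i) < last 0 (nth [::] T i.+1)).

Definition rrw (T : tableau) : seq nat := flatten [seq rev r | r <- T].

Definition yamanouchi (w : seq nat) : Prop :=
  forall n k, 0 < k -> count_mem k.+1 (take n w) <= count_mem k (take n w).

Definition yamanouchi_tableau (T : tableau) : Prop := yamanouchi (rrw T).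

Definition LR_ribbon_tableau (T : tableau) : Prop :=
  [/\ ribbon_shape T, positive_entries T, ribbon_semistandard T
    & yamanouchi_tableau T].

Definition rpick (L : seq nat) (b : nat) : nat :=
  let c := [seq x <- L | x < b] in
  if c is [::] then foldr maxn 0 L else foldr maxn 0 c.

Fixpoint rmatch (L R : seq nat) : seq nat * seq nat :=
  match R with
  | [::] => ([::], L)
  | b :: R' => let m := rpick L b in
               let p := rmatch (rem m L) R' in (m :: p.1, p.2)
  end.

Definition rmatrix_rows (top bot : seq nat) : seq nat * seq nat :=
  let p := rmatch top bot in
  (sort leq p.1, sort leq (bot ++ p.2)).

Definition rmatrix_swap (T : tableau) (i : nat) : tableau :=
  let p := rmatrix_rows (nth [::] T i) (nth [::] T i.+1) in
  take i T ++ [:: p.1; p.2] ++ drop i.+2 T.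

From mathcomp Require Import all_boot zify.

(* In the reverse reading word rows i and i+1 form two consecutive weakly
   decreasing blocks, before and after the R-matrix step.  Inside such a
   block the ballot condition for (k, k+1) is hardest just before the first
   k, so it amounts to comparing all k+1's of the block with the k's read
   before it.  The new top row is a sub-multiset of the old one, which
   handles the first block.  For the second block, the matching pairs each
   k+1 of the old bottom row with a k of the old top row as long as an
   unmatched k remains: either these k+1's are compensated by k's of the
   new top row, or no k moves down, and both cases reduce to the ballot
   counts of the original word.  Past both rows the content is unchanged. *)

Lemma foldr_maxn_mem (s : seq nat) : s != [::] -> foldr maxn 0 s \in s.
Proof.
elim: s => [|y s IH] // _; case: (eqVneq s [::]) => [-> | /IH sm].
  by rewrite /= maxn0 mem_head.
(* [leqP] also rewrites [maxn y _] to the corresponding argument. *)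
by rewrite /= in_cons; case: leqP => _; rewrite ?sm ?orbT ?eqxx.
Qed.

Lemma rpick_mem L b : L != [::] -> rpick L b \in L.
Proof.
rewrite /rpick; case E: [seq x <- L | x < b] => [|y c] L0; first exact: foldr_maxn_mem.
by have := @foldr_maxn_mem (y :: c) isT; rewrite -E mem_filter => /andP[].
Qed.

Lemma rpick_pred L k : k \in L -> rpick L k.+1 = k.
Proof.
move=> kL; have kLk : k \in [seq x <- L | x < k.+1] by rewrite mem_filter ltnSn.
rewrite /rpick; case E: [seq x <- L | x < k.+1] => [|y c]; first by rewrite E in kLk.
rewrite -E foldrE; apply/eqP; rewrite eqn_leq (leq_bigmax_seq (F := id)) // andbT.
by apply/bigmax_leqP_seq => x; rewrite mem_filter ltnS => /andP[].
Qed.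

Lemma mem_rmatch_unmatched L R x : x \in (rmatch L R).2 -> x \in L.
Proof. by elim: R L => [|b R IH] L //= /IH /mem_rem. Qed.

Lemma perm_rmatch L R : size R <= size L ->
  perm_eq ((rmatch L R).1 ++ (rmatch L R).2) L.
Proof.
elim: R L => [|b R IH] L //= RL.
have L0 : L != [::] by case: L RL.
have bL := @rpick_mem L b L0.
have RL' : size R <= size (rem (rpick L b) L) by rewrite size_rem //; case: (size L) RL.
by rewrite -cat_cons perm_sym (perm_trans (perm_to_rem bL)) // perm_cons perm_sym IH.
Qed.

(* Each k.+1 of R is matched with a k of L while an unmatched k is left. *)
Lemma rmatch_succ_compensated L R k :
  count_mem k.+1 R <= count_mem k (rmatch L R).1 \/ k \notin (rmatch L R).2.
Proof.
elim: R L => [|b R IH] L /=; first by left.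
case: (IH (rem (rpick L b) L)) => [le_R|]; last by right.
case: (eqVneq b k.+1) le_R => [-> | _] le_R.
  have [Lk | Lk] := boolP (k \in L); last first.
    by right; apply: contra Lk => /mem_rmatch_unmatched /mem_rem.
  by left; rewrite rpick_pred // in le_R *; rewrite eqxx leq_add2l.
by left; rewrite add0n (leq_trans le_R) ?leq_addl.
Qed.

Definition ballot k (w : seq nat) := count_mem k.+1 w <= count_mem k w.

Lemma sorted_geq_split (D : seq nat) k : sorted geq D ->
  exists D1 D2, [/\ D = D1 ++ D2, k \notin D1 & k.+1 \notin D2].
Proof.
elim: D => [_|x D IH xD]; first by exists [::], [::].
have /allP Dx := order_path_min (rev_trans leq_trans) xD.
case: (leqP x k) => [xk | kx].
  exists [::], (x :: D); split=> //; apply/negP; rewrite in_cons.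
  by case/orP => [/eqP | /Dx /=]; lia.
have [D1 [D2 [-> kD1 kD2]]] := IH (path_sorted xD).
by exists (x :: D1), D2; split=> //; rewrite in_cons (ltn_eqF kx).
Qed.

Lemma ballot_cat_take P D k j :
  count_mem k.+1 P + count_mem k.+1 D <= count_mem k P -> ballot k (P ++ take j D).
Proof.
have := leq_count_subseq (pred1 k.+1) (take_subseq D j).
by rewrite /ballot !count_cat; lia.
Qed.

Lemma yamanouchi_cat_sorted_geq {P D T : seq nat} {k : nat} :
  yamanouchi (P ++ D ++ T) -> 0 < k -> sorted geq D ->
  count_mem k.+1 P + count_mem k.+1 D <= count_mem k P.
Proof.
move=> yPDT k0 /(@sorted_geq_split D k) [D1 [D2 [eD kD1 kD2]]].
have := yPDT (size (P ++ D1)) k k0.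
rewrite eD -catA catA take_size_cat // !count_cat.
by rewrite (count_memPn kD1) (count_memPn kD2); lia.
Qed.

Lemma yamanouchi_perm_block P Q Q' S :
  perm_eq Q Q' -> yamanouchi (P ++ Q' ++ S) ->
  (forall j k, 0 < k -> ballot k (P ++ take j Q)) -> yamanouchi (P ++ Q ++ S).
Proof.
move=> QQ' yQ' ballotQ n k k0; have := yQ' n k k0.
rewrite !take_cat -(perm_size QQ'); case: ltnP => // _.
case: ltnP => [_ _ | _]; first exact: ballotQ.
by rewrite !count_cat !(permP QQ').
Qed.

Lemma yamanouchi_rmatrix_rows P S L R :
  sorted leq L -> sorted leq R -> size R <= size L ->
  yamanouchi (P ++ rev L ++ rev R ++ S) ->
  yamanouchi (P ++ rev (rmatrix_rows L R).1 ++ rev (rmatrix_rows L R).2 ++ S).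
Proof.
rewrite /rmatrix_rows /= => sL sR RL yLR.
have pLR := @perm_rmatch L R RL.
set M := (rmatch L R).1 in pLR *; set U := (rmatch L R).2 in pLR *.
have cL x : count_mem x M + count_mem x U = count_mem x L.
  by rewrite -count_cat (permP pLR).
rewrite [rev _ ++ _ ++ S]catA.
apply: (@yamanouchi_perm_block P _ (rev L ++ rev R)); last first.
- move=> j k k0.
  have sL' : sorted geq (rev L) by rewrite rev_sorted.
  have sR' : sorted geq (rev R) by rewrite rev_sorted.
  have bal_L := yamanouchi_cat_sorted_geq yLR k0 sL'.
  have yLR' : yamanouchi ((P ++ rev L) ++ rev R ++ S) by rewrite -catA.
  have bal_R := yamanouchi_cat_sorted_geq yLR' k0 sR'.
  rewrite !count_cat !count_rev in bal_L bal_R; have := cL k; have := cL k.+1.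
  rewrite take_cat; case: ifP => _ cnt_succ cnt.
    by apply: ballot_cat_take; rewrite count_rev count_sort; lia.
  rewrite catA; apply: ballot_cat_take.
  rewrite !count_cat !count_rev !count_sort count_cat.
  by have := rmatch_succ_compensated L R k; rewrite -/M -/U => -[|/count_memPn]; lia.
- by rewrite -catA.
- rewrite -!rev_cat perm_rev perm_sym perm_rev perm_sym.
  apply: perm_trans (perm_cat (permEl (perm_sort leq _)) (permEl (perm_sort leq _))) _.
  by rewrite -catA perm_cat2l perm_catC.
Qed.

Lemma rrw_cat (s t : tableau) : rrw (s ++ t) = rrw s ++ rrw t.
Proof. by rewrite /rrw map_cat flatten_cat. Qed.

Lemma rrw_split_rows (T : tableau) i : i.+1 < size T ->
  rrw T = rrw (take i T) ++ rev (nth [::] T i) ++ rev (nth [::] T i.+1)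
          ++ rrw (drop i.+2 T).
Proof.
move=> iT; rewrite -{1}(cat_take_drop i T) rrw_cat.
by rewrite (drop_nth [::] (ltnW iT)) (drop_nth [::] iT).
Qed.

Theorem lemma3p1 (A : tableau) (i : nat) :
  LR_ribbon_tableau A ->
  i.+1 < size A ->
  size (nth [::] A i.+1) < size (nth [::] A i) ->
  yamanouchi_tableau (rmatrix_swap A i).
Proof.
move=> [_ _ [sA _] yA] iA RL.
have sorted_row j : j < size A -> sorted leq (nth [::] A j) by move=> jA; apply/sA/mem_nth.
rewrite /yamanouchi_tableau /rmatrix_swap rrw_cat.
apply: yamanouchi_rmatrix_rows; [exact/sorted_row/ltnW | exact: sorted_row | exact: ltnW |].
by rewrite -rrw_split_rows.
Qed.
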